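(* Under the standing assumptions, $G$ does not contain a vertex $v$ of degree $8$ together with pairwise distinct neighbours $x,u,y,z,w,t$ of $v$ and a vertex $p\notin\{v,x,u,y,z,w,t\}$ such that $xu,uy,zw,wt\in E(G)$, $p$ is adjacent to both $y$ and $z$, and $d(x)=d(y)=d(z)=d(t)=3$.
   Context: Standing assumptions: A total $9$-coloring of a graph is an assignment of colors from $\{1,\dots,9\}$ to the vertices and edges such that adjacent vertices, edges sharing an endpoint, and a vertex and an incident edge receive different colors. A $4$-fan is the graph on six vertices $c,u_1,\dots,u_5$ with edges $cu_j$ ($1\le j\le5$) and $u_ju_{j+1}$ ($1\le j\le4$). $G$ is a minimal counterexample: $G$ is a simple planar graph with maximum degree $8$, containing no subgraph isomorphic to a $4$-fan, that has no total $9$-coloring, and such that every simple planar graph $H$ with maximum degree at most $8$, no subgraph isomorphic to a $4$-fan, and $|V(H)|+|E(H)|<|V(G)|+|E(G)|$ has a total $9$-coloring. $d(\cdot)$ denotes degree in $G$. *)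

From Stdlib Require Import Reals.
From mathcomp Require Import all_boot.

Set Implicit Arguments.
Unset Strict Implicit.
Unset Printing Implicit Defensive.

Section Drawing.
Local Open Scope R_scope.

Definition pt := (R * R)%type.

Definition dist_pt (a b : pt) : R := Rmax (Rabs (fst a - fst b)) (Rabs (snd a - snd b)).

Definition in01 (t : R) : Prop := 0 <= t <= 1.
Definition open01 (t : R) : Prop := 0 < t < 1.

Definition cont01 (gamma : R -> pt) : Prop :=
  forall t, in01 t -> forall eps, 0 < eps -> exists delta, 0 < delta /\
    forall s, in01 s -> Rabs (s - t) < delta -> dist_pt (gamma s) (gamma t) < eps.

Definition jordan_arc (gamma : R -> pt) (a b : pt) : Prop :=
  cont01 gamma /\ (forall s t, in01 s -> in01 t -> gamma s = gamma t -> s = t)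
  /\ gamma 0 = a /\ gamma 1 = b.

End Drawing.

Definition simple_graph (T : finType) (adj : rel T) : Prop :=
  (forall x, ~~ adj x x) /\ (forall x y, adj x y = adj y x).

Definition planar (T : finType) (adj : rel T) : Prop :=
  exists (pos : T -> pt) (arc : T -> T -> R -> pt),
    (forall x y, pos x = pos y -> x = y) /\
    (forall x y, adj x y -> jordan_arc (arc x y) (pos x) (pos y)) /\
    (forall x y z t, adj x y -> open01 t -> arc x y t <> pos z) /\
    (forall x y x' y', adj x y -> adj x' y' -> [set x; y] != [set x'; y'] :> {set T} ->
       forall s t, open01 s -> open01 t -> arc x y s <> arc x' y' t).

Definition deg (T : finType) (adj : rel T) (x : T) : nat := #|[set y | adj x y]|.

Definition edge_set (T : finType) (adj : rel T) : {set {set T}} :=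
  [set e : {set T} | [exists x, exists y, adj x y && (e == [set x; y])]].

Definition gsize (T : finType) (adj : rel T) : nat := #|T| + #|edge_set adj|.

Definition maxdeg_le (T : finType) (adj : rel T) (k : nat) : Prop :=
  forall x, deg adj x <= k.

Definition maxdeg_eq (T : finType) (adj : rel T) (k : nat) : Prop :=
  maxdeg_le adj k /\ exists x, deg adj x = k.

(* G contains a subgraph isomorphic to the 4-fan c,u1..u5 (not necessarily induced) *)
Definition has_4fan (T : finType) (adj : rel T) : Prop :=
  exists (c u1 u2 u3 u4 u5 : T),
    uniq [:: c; u1; u2; u3; u4; u5] /\
    adj c u1 /\ adj c u2 /\ adj c u3 /\ adj c u4 /\ adj c u5 /\
    adj u1 u2 /\ adj u2 u3 /\ adj u3 u4 /\ adj u4 u5.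

(* vertex colours f, edge colours g (g x y is the colour of edge xy, g symmetric on edges) *)
Definition total_coloring (T : finType) (adj : rel T) (k : nat)
    (f : T -> 'I_k) (g : T -> T -> 'I_k) : Prop :=
  (forall x y, adj x y -> g x y = g y x) /\
  (forall x y, adj x y -> f x != f y) /\
  (forall x y, adj x y -> f x != g x y) /\
  (forall x y z, adj x y -> adj x z -> y != z -> g x y != g x z).

Definition total_colorable (T : finType) (adj : rel T) (k : nat) : Prop :=
  exists f g, @total_coloring T adj k f g.

Definition minimal_counterexample (T : finType) (adj : rel T) : Prop :=
  simple_graph adj /\ planar adj /\ maxdeg_eq adj 8 /\ ~ has_4fan adj /\
  ~ total_colorable adj 9 /\
  (forall (T' : finType) (adj' : rel T'),
     simple_graph adj' -> planar adj' -> maxdeg_le adj' 8 -> ~ has_4fan adj' ->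
     gsize adj' < gsize adj -> total_colorable adj' 9).

From mathcomp Require Import all_boot.

Set Implicit Arguments.
Unset Strict Implicit.
Unset Printing Implicit Defensive.

(* Delete the edge vy: by minimality G - vy has a total 9-colouring.  Forget
   the colours of the degree-3 vertices x, y, z, t; each of them sees at most
   six colours, so they can be recoloured at the very end.  The vertex v has
   seven coloured edges and its own colour, so some colour a is missing at v.
   Now colour the twelve edges vx, vu, vy, vz, vw, vt, ux, uy, wz, wt, py, pz
   afresh: at each of v, u, w, p the new colours are drawn from the old ones
   (and a, at v), which keeps these four vertices proper, and the remaining
   requirement that the edges at x, y, z, t get distinct colours is met by a
   finite case analysis on the coincidences among the colours involved. *)

Lemma exists_free_colour k (X : {set 'I_k}) : #|X| < k -> exists c, c \notin X.
Proof.
move=> ltXk; have /set0Pn[c] : ~: X != set0.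
  by rewrite -card_gt0 cardsCs setCK card_ord subn_gt0.
by rewrite inE; exists c.
Qed.

Lemma uniq_map_neq (T1 T2 : eqType) (f : T1 -> T2) (s : seq T1) a b :
  uniq (map f s) -> a \in s -> b \in s -> a != b -> f a != f b.
Proof.
move=> Us As Bs; apply: contra => /eqP Efab.
have Ea : f a = nth (f a) (map f s) (index a s) by rewrite (nth_map a) ?nth_index ?index_mem.
have Eb : f b = nth (f a) (map f s) (index b s) by rewrite (nth_map a) ?nth_index ?index_mem.
rewrite -(nth_index a As) -(nth_index a Bs); apply/eqP; congr nth; apply/eqP.
by rewrite -(nth_uniq (f a) _ _ Us) ?size_map ?index_mem // -Ea -Eb Efab.
Qed.

Lemma eq_set2 (T : finType) (a b c d : T) :
  ([set a; b] == [set c; d]) = ((a == c) && (b == d)) || ((a == d) && (b == c)).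
Proof.
apply/eqP/idP=> [E | /orP[] /andP[/eqP-> /eqP->] //]; last exact: setUC.
have : d \in [set a; b] by rewrite E set22.
have : c \in [set a; b] by rewrite E set21.
have : a \in [set c; d] by rewrite -E set21.
have : b \in [set c; d] by rewrite -E set22.
move=> /set2P[]-> /set2P[]->; rewrite !in_set2 ?eqxx ?orbT ?orbb ?orbF ?andbT //.
all: by case: (eqVneq c d).
Qed.

Section PartialColouring.
Variables (T : finType) (adj : rel T) (k : nat).
Hypotheses (adj_irr : forall a, ~~ adj a a) (adj_sym : forall a b, adj a b = adj b a).

(* A total colouring in which the vertices of [S] are still uncoloured. *)
Definition total_coloring_off (S : seq T) (f : T -> 'I_k) (g : T -> T -> 'I_k) :=
  [/\ forall a b, adj a b -> g a b = g b a,
      forall a b, adj a b -> a \notin S -> b \notin S -> f a != f b,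
      forall a b, adj a b -> a \notin S -> f a != g a b &
      forall a b c, adj a b -> adj a c -> b != c -> g a b != g a c].

(* Each neighbour of [q] forbids at most two colours: its own and that of the edge to [q]. *)
Lemma colour_low_degree_vertex q S f g :
  (deg adj q).*2 < k -> total_coloring_off (q :: S) f g ->
  exists f', total_coloring_off S f' g.
Proof.
move=> ltqk [gsym fadj fg gadj].
set N := [set b | adj q b].
have [c] : exists c, c \notin (f @: N) :|: (g q @: N).
  apply: exists_free_colour; apply: leq_ltn_trans (leq_card_setU _ _) _.
  by rewrite -addnn in ltqk; apply: leq_ltn_trans ltqk; apply: leq_add; apply: leq_imset_card.
rewrite in_setU negb_or => /andP[cf cg].
have qN b : adj q b -> b \in N by rewrite inE.
exists (fun a => if a == q then c else f a); split=> // [a b ab aS bS | a b ab aS].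
- have [aq | aq] := eqVneq a q; first rewrite aq in ab *.
    have [bq | _] := eqVneq b q; first by rewrite bq (negbTE (adj_irr q)) in ab.
    by apply: contraNneq cf => ->; rewrite imset_f ?qN.
  have [bq | bq] := eqVneq b q; last by apply: fadj; rewrite // inE negb_or ?aq ?bq.
  by apply: contraNneq cf => <-; rewrite imset_f // qN // adj_sym -bq.
- have [aq | aq] := eqVneq a q; last by apply: fg; rewrite // inE negb_or aq.
  by rewrite aq in ab *; apply: contraNneq cg => ->; rewrite imset_f ?qN.
Qed.

Lemma total_colorable_off S f g :
  all (fun q => (deg adj q).*2 < k) S -> total_coloring_off S f g ->
  total_colorable adj k.
Proof.
elim: S f => [|q S IHS] f /= => [_ [gsym fadj fg gadj] | /andP[ltqk lowS] colS].
  by exists f, g; split=> //; split=> [a b ab|]; [apply: fadj | split=> // a b ab; apply: fg].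
by have [f' colS'] := colour_low_degree_vertex ltqk colS; apply: IHS colS'.
Qed.

End PartialColouring.

Section Subgraph.
Variables (T : finType) (adj adj' : rel T).
Hypothesis sub : subrel adj' adj.

Lemma planar_subrel : planar adj -> planar adj'.
Proof.
move=> [pos [arc [pos_inj [arcJ [arc_pos arc_disj]]]]].
exists pos, arc; split=> //; split; last split.
- by move=> a b /sub; apply: arcJ.
- by move=> a b c s /sub; apply: arc_pos.
- by move=> a b a' b' /sub ab /sub ab'; apply: arc_disj.
Qed.

Lemma deg_subrel a : deg adj' a <= deg adj a.
Proof. by apply: subset_leq_card; apply/subsetP=> b; rewrite !inE => /sub. Qed.

Lemma maxdeg_le_subrel k : maxdeg_le adj k -> maxdeg_le adj' k.
Proof. by move=> md a; apply: leq_trans (deg_subrel a) (md a). Qed.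

Lemma has_4fan_subrel : has_4fan adj' -> has_4fan adj.
Proof.
move=> [c [u1 [u2 [u3 [u4 [u5 [U [h1 [h2 [h3 [h4 [h5 [h6 [h7 [h8 h9]]]]]]]]]]]]]]].
by exists c, u1, u2, u3, u4, u5; do !split=> //; apply: sub.
Qed.

End Subgraph.

Definition delete_edge (T : finType) (adj : rel T) (v y : T) : rel T :=
  fun a b => adj a b && ([set a; b] != [set v; y]).

Section DeleteEdge.
Variables (T : finType) (adj : rel T) (v y : T).
Local Notation adj' := (delete_edge adj v y).

Lemma delete_edge_subrel : subrel adj' adj.
Proof. by move=> a b /andP[]. Qed.

Lemma simple_graph_delete_edge : simple_graph adj -> simple_graph adj'.
Proof.
move=> [irr sym]; split=> [a | a b]; first by rewrite /delete_edge (negbTE (irr a)).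
by rewrite /delete_edge sym setUC.
Qed.

Lemma gsize_delete_edge : adj v y -> gsize adj' < gsize adj.
Proof.
move=> vy; rewrite /gsize ltn_add2l; apply: proper_card; apply/properP; split.
  apply/subsetP=> e; rewrite !inE => /existsP[a /existsP[b /andP[/delete_edge_subrel ab E]]].
  by apply/existsP; exists a; apply/existsP; exists b; rewrite ab.
exists [set v; y].
  by rewrite inE; apply/existsP; exists v; apply/existsP; exists y; rewrite vy eqxx.
rewrite inE; apply/negP => /existsP[a /existsP[b /andP[/andP[_ ne] /eqP E]]].
by rewrite E eqxx in ne.
Qed.

Lemma delete_edge_colorable :
  minimal_counterexample adj -> adj v y -> total_colorable adj' 9.
Proof.
move=> [simple [pl [[md _] [no4fan [_ mini]]]]] vy.
apply: mini; [exact: simple_graph_delete_edge | exact: planar_subrel delete_edge_subrel pl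
  | exact: maxdeg_le_subrel delete_edge_subrel _ md | | exact: gsize_delete_edge].
by move/(has_4fan_subrel delete_edge_subrel).
Qed.

End DeleteEdge.

Ltac neq_of H :=
  lazymatch type of H with
  | is_true (_ && _) =>
      let H1 := fresh in let H2 := fresh in case/andP: H => H1 H2; neq_of H1; neq_of H2
  | is_true (~~ (_ || _)) => rewrite negb_or in H; neq_of H
  | is_true (uniq _) => rewrite /= ?inE in H; neq_of H
  | is_true (~~ (?a == ?b)) =>
      have ? : (a == b) = false := negbTE H;
      have ? : (b == a) = false := etrans (eq_sym b a) (negbTE H);
      clear H
  | _ => idtac
  end.

Ltac intro_neq := let H := fresh in move=> H; neq_of H.

Ltac neq_facts :=
  repeat match goal with
  | H : is_true (_ && _) |- _ => neq_of H
  | H : is_true (~~ (_ || _)) |- _ => neq_of H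
  | H : is_true (uniq _) |- _ => neq_of H
  | H : is_true (~~ (_ == _)) |- _ => neq_of H
  end.

Ltac simpl_neq :=
  rewrite /= ?inE;
  repeat match goal with N : (?a == ?b) = false |- context [?a == ?b] => rewrite N end;
  rewrite ?eqxx /= ?andbF ?orbF.

(* [a] is a colour missing at v; [sX] is the old colour of the edge vX, [xu],
   [yu], [zw], [tw], [yp], [zp] those of ux, uy, wz, wt, py, pz, and [fx], [ft]
   those of the third edges at x and t.  A solution lists new colours for the
   twelve edges, permuting the old colours at v (with [a]), u, w and p, and
   proper at x, y, z and t. *)
Definition recolouring_exists (K : eqType) (a sx su sz sw st xu yu yp zp zw tw fx ft : K) :=
  exists vx vu vy vz vw vt ux uy wz wt py pz : K,
    [&& [&& uniq [:: vx; vu; vy; vz; vw; vt],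
            all (mem [:: a; sx; su; sz; sw; st]) [:: vx; vu; vy; vz; vw; vt],
            uniq [:: vu; ux; uy] & all (mem [:: su; xu; yu]) [:: vu; ux; uy]],
        [&& uniq [:: vw; wz; wt], all (mem [:: sw; zw; tw]) [:: vw; wz; wt],
            uniq [:: py; pz] & all (mem [:: yp; zp]) [:: py; pz]] &
        [&& uniq [:: vx; ux; fx], uniq [:: vy; uy; py], uniq [:: vz; pz; wz] & uniq [:: vt; wt; ft]]].

Lemma local_recolouring_free_is_uy (K : eqType) (a sx su sz sw st xu yp zp zw tw fx ft : K) :
  uniq [:: a; sx; su; sz; sw; st] -> uniq [:: su; xu; a] -> uniq [:: sw; zw; tw] ->
  yp != zp -> uniq [:: sx; xu; fx] -> a != yp -> uniq [:: sz; zp; zw] -> uniq [:: st; tw; ft] ->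
  recolouring_exists a sx su sz sw st xu a yp zp zw tw fx ft.
Proof.
move=> *; neq_facts.
have [afx | afx] := eqVneq a fx; first subst fx.
- have [suyp | suyp] := eqVneq su yp; first subst yp.
  + have [suzw | suzw] := eqVneq su zw; first subst zw.
    * have [azp | azp] := eqVneq a zp; first subst zp.
        by exists sw, a, sx, sz, su, st, su, xu, sw, tw, su, a; simpl_neq.
      by neq_facts; exists sx, su, sz, a, sw, st, xu, a, su, tw, su, zp; simpl_neq.
    * by neq_facts; exists sz, a, sx, su, sw, st, su, xu, zw, tw, su, zp; simpl_neq.
  + neq_facts; have [xuyp | xuyp] := eqVneq xu yp; first subst yp.
      by exists su, a, sx, sz, sw, st, xu, su, zw, tw, xu, zp; simpl_neq.
    by neq_facts; exists sx, a, su, sz, sw, st, su, xu, zw, tw, yp, zp; simpl_neq.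
- neq_facts; have [sxyp | sxyp] := eqVneq sx yp; first subst yp.
    by exists sx, su, a, sz, sw, st, a, xu, zw, tw, sx, zp; simpl_neq.
  by neq_facts; exists a, su, sx, sz, sw, st, xu, a, zw, tw, yp, zp; simpl_neq.
Qed.

Lemma local_recolouring_free_is_py (K : eqType) (a sx su sz sw st xu yu zp zw tw fx ft : K) :
  uniq [:: a; sx; su; sz; sw; st] -> uniq [:: su; xu; yu] -> uniq [:: sw; zw; tw] ->
  a != zp -> uniq [:: sx; xu; fx] -> yu != a -> uniq [:: sz; zp; zw] -> uniq [:: st; tw; ft] ->
  recolouring_exists a sx su sz sw st xu yu a zp zw tw fx ft.
Proof.
move=> *; neq_facts.
have [szyu | szyu] := eqVneq sz yu; first subst yu.
- have [azw | azw] := eqVneq a zw; first subst zw.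
    have [aft | aft] := eqVneq a ft; first subst ft.
      have [zpsw | zpsw] := eqVneq zp sw; first subst sw.
        by exists sx, su, st, sz, a, zp, xu, sz, zp, tw, zp, a; simpl_neq.
      by neq_facts; exists sx, su, sw, sz, a, st, xu, sz, sw, tw, a, zp; simpl_neq.
    by neq_facts; exists sx, su, st, sz, sw, a, xu, sz, a, tw, a, zp; simpl_neq.
  by neq_facts; exists sx, su, a, sz, sw, st, xu, sz, zw, tw, zp, a; simpl_neq.
- neq_facts; have [azw | azw] := eqVneq a zw; first subst zw.
    have [stzp | stzp] := eqVneq st zp; first subst zp.
      have [aft | aft] := eqVneq a ft; first subst ft.
        by exists sx, su, sz, sw, a, st, xu, yu, tw, sw, a, st; simpl_neq.
      by neq_facts; exists sx, su, sz, a, sw, st, xu, yu, tw, a, a, st; simpl_neq.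
    neq_facts; have [aft | aft] := eqVneq a ft; first subst ft.
      have [zpsw | zpsw] := eqVneq zp sw; first subst sw.
        have [yuzp | yuzp] := eqVneq yu zp; first subst zp.
          by exists sx, yu, sz, su, a, st, xu, su, yu, tw, yu, a; simpl_neq.
        by neq_facts; exists sx, su, sz, st, a, zp, xu, yu, zp, tw, zp, a; simpl_neq.
      by neq_facts; exists sx, su, sz, st, a, sw, xu, yu, sw, tw, a, zp; simpl_neq.
    by neq_facts; exists sx, su, sz, st, sw, a, xu, yu, a, tw, a, zp; simpl_neq.
  by neq_facts; exists sx, su, sz, a, sw, st, xu, yu, zw, tw, a, zp; simpl_neq.
Qed.

Lemma local_recolouring (K : eqType) (a sx su sz sw st xu yu yp zp zw tw fx ft : K) :
  uniq [:: a; sx; su; sz; sw; st] -> uniq [:: su; xu; yu] -> uniq [:: sw; zw; tw] ->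
  yp != zp -> uniq [:: sx; xu; fx] -> yu != yp -> uniq [:: sz; zp; zw] -> uniq [:: st; tw; ft] ->
  recolouring_exists a sx su sz sw st xu yu yp zp zw tw fx ft.
Proof.
have [<- | ayu] := eqVneq a yu; first exact: local_recolouring_free_is_uy.
have [<- | ayp] := eqVneq a yp; first exact: local_recolouring_free_is_py.
move=> *; neq_facts.
by exists sx, su, a, sz, sw, st, xu, yu, zw, tw, yp, zp; simpl_neq.
Qed.

Lemma deg3_third_neighbour (T : finType) (adj : rel T) q a b :
  deg adj q = 3 -> adj q a -> adj q b -> a != b -> exists2 c, adj q c & uniq [:: a; b; c].
Proof.
move=> dq qa qb ab.
have [c] : exists c, c \in [set d | adj q d] :\: [set a; b].
  apply/set0Pn; rewrite -card_gt0 cardsD subn_gt0.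
  apply: leq_ltn_trans (subset_leq_card (subsetIr _ _)) _.
  by rewrite cards2 ab; move: dq; rewrite /deg => ->.
rewrite !inE negb_or => /andP[/andP[ca cb] qc].
by exists c => //; rewrite /= !inE negb_or ab eq_sym ca eq_sym cb.
Qed.

Lemma deg3_neighbours (T : finType) (adj : rel T) q a b c :
  deg adj q = 3 -> adj q a -> adj q b -> adj q c -> uniq [:: a; b; c] ->
  forall d, adj q d -> d \in [:: a; b; c].
Proof.
move=> dq qa qb qc Uabc d qd.
have eqN : [:: a; b; c] =i [set d | adj q d].
  apply/subset_cardP; first by rewrite (card_uniqP Uabc) /= -dq.
  by apply/subsetP=> e; rewrite !inE => /or3P[]/eqP->.
by rewrite eqN inE.
Qed.

Section StarRecolouring.
Variables (T C : eqType) (adj : rel T) (g h : T -> T -> C) (a : T) (L : seq T).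
Hypothesis h_off : forall c, adj a c -> c \notin L -> h a c = g a c.

Lemma recolour_star_edges (S : seq C) :
  (forall b c, adj a b -> adj a c -> b \notin L -> c \notin L -> b != c -> g a b != g a c) ->
  (forall c, adj a c -> c \notin L -> g a c \notin S) ->
  {subset map (h a) L <= S} -> uniq (map (h a) L) ->
  forall b c, adj a b -> adj a c -> b != c -> h a b != h a c.
Proof.
move=> g_off g_S hL_S uhL b c ab ac bc.
have fresh e : adj a e -> e \notin L -> h a e \notin map (h a) L.
  by move=> ae eL; rewrite h_off //; apply: contra (hL_S _) (g_S e ae eL).
case: (boolP (b \in L)) => bL; case: (boolP (c \in L)) => cL.
- exact: uniq_map_neq uhL bL cL bc.
- by apply: contraNneq (fresh c ac cL) => <-; apply: map_f.
- by apply: contraNneq (fresh b ab bL) => ->; apply: map_f.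
- by rewrite !h_off //; apply: g_off.
Qed.

Lemma recolour_star_vertex (S : seq C) (fa : C) :
  (forall c, adj a c -> c \notin L -> fa != g a c) -> fa \notin S ->
  {subset map (h a) L <= S} -> forall b, adj a b -> fa != h a b.
Proof.
move=> fg fa_S hL_S b ab; case: (boolP (b \in L)) => bL; last by rewrite h_off // fg.
by apply: contraNneq fa_S => ->; apply/hL_S/map_f.
Qed.

End StarRecolouring.

Fixpoint override (T : finType) (C : Type) (ch : seq (T * T * C)) (g : T -> T -> C) (a b : T) : C :=
  if ch is (c, d, col) :: ch' then
    if [set a; b] == [set c; d] then col else override ch' g a b
  else g a b.

Lemma override_sym (T : finType) (C : Type) (ch : seq (T * T * C)) g a b :
  g a b = g b a -> override ch g a b = override ch g b a.
Proof. by move=> gab; elim: ch => //= -[[c d] col] ch ->; rewrite [[set b; a]]setUC. Qed.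

Lemma override_id (T : finType) (C : Type) (ch : seq (T * T * C)) g a b :
  all (fun e => [set a; b] != [set e.1.1; e.1.2]) ch -> override ch g a b = g a b.
Proof. by elim: ch => //= -[[c d] col] ch IHch /andP[/negbTE-> /IHch]. Qed.

Section Configuration.
Variables (T : finType) (adj : rel T).
Hypotheses (adj_irr : forall a, ~~ adj a a) (adj_sym : forall a b, adj a b = adj b a).
Variables v x u y z w t p : T.
Hypothesis distinct : uniq [:: v; x; u; y; z; w; t; p].
Hypotheses (avx : adj v x) (avu : adj v u) (avy : adj v y) (avz : adj v z) (avw : adj v w) (avt : adj v t).
Hypotheses (axu : adj x u) (auy : adj u y) (azw : adj z w) (awt : adj w t) (apy : adj p y) (apz : adj p z).
Hypotheses (dv : deg adj v = 8) (dx : deg adj x = 3) (dy : deg adj y = 3) (dz : deg adj z = 3) (dt : deg adj t = 3).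

Local Notation adj' := (delete_edge adj v y).
Variables (f : T -> 'I_9) (g : T -> T -> 'I_9).
Hypothesis col : total_coloring adj' f g.

Ltac distinctness := let D := fresh in have D := distinct; neq_of D.

Ltac simpl_adj :=
  repeat match goal with
  | H : is_true (adj ?a ?b) |- context [adj ?a ?b] => rewrite H
  | H : is_true (adj ?a ?b) |- context [adj ?b ?a] => rewrite [adj b a]adj_sym H
  end.

Lemma delete_edgeE a b : adj' a b = adj a b && ~~ (((a == v) && (b == y)) || ((a == y) && (b == v))).
Proof. by rewrite /delete_edge eq_set2. Qed.

Ltac solve_adj' := rewrite /= ?delete_edgeE; simpl_adj; simpl_neq.

Lemma adj_neq a b : adj a b -> b != a.
Proof. by apply: contraTneq => ->; rewrite adj_irr. Qed.

Lemma g_sym a b : adj' a b -> g a b = g b a.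
Proof. by case: col => H _; apply: H. Qed.
Lemma f_adj a b : adj' a b -> f a != f b.
Proof. by case: col => _ [H _]; apply: H. Qed.
Lemma fg_adj a b : adj' a b -> f a != g a b.
Proof. by case: col => _ [_ [H _]]; apply: H. Qed.
Lemma g_adj a b c : adj' a b -> adj' a c -> b != c -> g a b != g a c.
Proof. by case: col => _ [_ [_ H]]; apply: H. Qed.

Lemma colour_notin_map a c0 L :
  (forall r, adj' a r -> c0 != g a r) -> all (adj' a) L -> c0 \notin map (g a) L.
Proof.
move=> c0_free aL; apply/mapP=> -[r rL E].
by move: (c0_free r (allP aL r rL)); rewrite E eqxx.
Qed.

Lemma edge_colour_notin_map a c L :
  adj' a c -> all (adj' a) L -> c \notin L -> g a c \notin map (g a) L.
Proof.
move=> ac aL cL; apply/mapP=> -[r rL]; apply/eqP.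
by apply: g_adj ac (allP aL r rL) _; apply: contraNneq cL => ->.
Qed.

Lemma uniq_map_colours a L : all (adj' a) L -> uniq L -> uniq (map (g a) L).
Proof.
move=> aL; rewrite map_inj_in_uniq // => b c bL cL.
by apply: contra_eq; apply: g_adj; apply: (allP aL).
Qed.

Lemma free_colour_at_v : exists2 al, al != f v & forall r, adj' v r -> al != g v r.
Proof.
set N := [set r | adj' v r].
have cardN : #|N| <= 7.
  have : #|[set r | adj v r] :\ y| = 7.
    by move: dv; rewrite /deg (cardsD1 y) inE avy => -[].
  move=> <-; apply/subset_leq_card/subsetP=> r; rewrite !inE => /andP[-> ne].
  by rewrite andbT; apply: contraNneq ne => ->.
have [al] : exists al, al \notin f v |: (g v @: N).
  apply: exists_free_colour; rewrite cardsU1.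
  by apply: leq_ltn_trans (leq_add (leq_b1 _) (leq_imset_card _ _)) _; rewrite add1n ltnS.
rewrite in_setU1 negb_or => /andP[al_fv al_N]; exists al => // r vr.
by apply: contraNneq al_N => ->; rewrite imset_f // inE.
Qed.

Section Recolouring.
Variables (al : 'I_9) (x' t' : T).
Hypotheses (al_fv : al != f v) (al_free : forall r, adj' v r -> al != g v r).
Hypotheses (Nx : forall d, adj x d -> d \in [:: v; u; x']) (Nt : forall d, adj t d -> d \in [:: v; w; t']).
Hypotheses (Ny : forall d, adj y d -> d \in [:: v; u; p]) (Nz : forall d, adj z d -> d \in [:: v; w; p]).
Variables cvx cvu cvy cvz cvw cvt cux cuy cwz cwt cpy cpz : 'I_9.
Hypotheses (new_v : uniq [:: cvx; cvu; cvy; cvz; cvw; cvt])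
  (new_v_old : all (mem (al :: map (g v) [:: x; u; z; w; t])) [:: cvx; cvu; cvy; cvz; cvw; cvt])
  (new_u : uniq [:: cvu; cux; cuy]) (new_u_old : all (mem (map (g u) [:: v; x; y])) [:: cvu; cux; cuy])
  (new_w : uniq [:: cvw; cwz; cwt]) (new_w_old : all (mem (map (g w) [:: v; z; t])) [:: cvw; cwz; cwt])
  (new_p : uniq [:: cpy; cpz]) (new_p_old : all (mem (map (g p) [:: y; z])) [:: cpy; cpz])
  (new_x : uniq [:: cvx; cux; g x x']) (new_y : uniq [:: cvy; cuy; cpy])
  (new_z : uniq [:: cvz; cpz; cwz]) (new_t : uniq [:: cvt; cwt; g t t']).

Definition recolour : T -> T -> 'I_9 :=
  override [:: (v, x, cvx); (v, u, cvu); (v, y, cvy); (v, z, cvz); (v, w, cvw); (v, t, cvt);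
               (u, x, cux); (u, y, cuy); (w, z, cwz); (w, t, cwt); (p, y, cpy); (p, z, cpz)] g.

Ltac eval_recolour := rewrite /recolour /= !eq_set2; simpl_neq.

Ltac unchanged_tac :=
  move=> c /adj_neq; intro_neq; rewrite ?inE; intro_neq; distinctness;
  rewrite /recolour override_id //= !eq_set2; simpl_neq.

Ltac old_proper_tac :=
  move=> b c ? ?; rewrite ?inE; intro_neq; intro_neq; move=> ?;
  apply: g_adj => //; distinctness; solve_adj'.

Lemma recolour_proper_v :
  (forall b c, adj v b -> adj v c -> b != c -> recolour v b != recolour v c) /\
  (forall b, adj v b -> f v != recolour v b).
Proof.
have off : forall c, adj v c -> c \notin [:: x; u; y; z; w; t] -> recolour v c = g v c.
  by unchanged_tac.
have new : map (recolour v) [:: x; u; y; z; w; t] = [:: cvx; cvu; cvy; cvz; cvw; cvt].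
  by distinctness; eval_recolour.
have sub : {subset map (recolour v) [:: x; u; y; z; w; t] <= al :: map (g v) [:: x; u; z; w; t]}.
  by rewrite new; apply/allP.
have vL : all (adj' v) [:: x; u; z; w; t] by distinctness; solve_adj'.
split.
- apply: (recolour_star_edges off _ _ sub); last by rewrite new.
    by old_proper_tac.
  move=> c vc cL; have vc' : adj' v c by move: cL; rewrite !inE; intro_neq; distinctness; solve_adj'.
  rewrite inE negb_or; apply/andP; split; first by rewrite eq_sym al_free.
  apply: edge_colour_notin_map => //.
  by move: cL; rewrite !inE !negb_or => /and5P[-> -> _ -> ->].
- apply: (recolour_star_vertex off _ _ sub).
    by move=> c vc; rewrite !inE; intro_neq; apply: fg_adj; distinctness; solve_adj'.
  by rewrite inE negb_or eq_sym al_fv colour_notin_map // => r; apply: fg_adj.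
Qed.

Lemma recolour_proper_permuted a L :
  (forall c, adj a c -> c \notin L -> recolour a c = g a c) ->
  (forall c, adj a c -> c \notin L -> adj' a c) -> all (adj' a) L ->
  uniq (map (recolour a) L) -> {subset map (recolour a) L <= map (g a) L} ->
  (forall b c, adj a b -> adj a c -> b != c -> recolour a b != recolour a c) /\
  (forall b, adj a b -> f a != recolour a b).
Proof.
move=> off off' aL uL sub; split.
- apply: (recolour_star_edges off _ _ sub uL).
    by move=> b c ab ac bL cL; apply: g_adj; apply: off'.
  by move=> c ac cL; apply: edge_colour_notin_map => //; apply: off'.
- apply: (recolour_star_vertex off _ _ sub).
    by move=> c ac cL; apply/fg_adj/off'.
  by apply: colour_notin_map aL => r; apply: fg_adj.
Qed.

Lemma recolour_proper_one_unchanged a L :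
  (forall c, adj a c -> c \notin L -> recolour a c = g a c) ->
  (forall b c, adj a b -> adj a c -> b \notin L -> c \notin L -> b = c) ->
  (forall c, adj a c -> c \notin L -> g a c \notin map (recolour a) L) ->
  uniq (map (recolour a) L) ->
  forall b c, adj a b -> adj a c -> b != c -> recolour a b != recolour a c.
Proof.
move=> off one fresh uL; apply: (recolour_star_edges off _ fresh (fun _ => id) uL).
by move=> b c ab ac bL cL; rewrite (one b c) ?eqxx.
Qed.

Lemma recolour_proper_u :
  (forall b c, adj u b -> adj u c -> b != c -> recolour u b != recolour u c) /\
  (forall b, adj u b -> f u != recolour u b).
Proof.
have new : map (recolour u) [:: v; x; y] = [:: cvu; cux; cuy] by distinctness; eval_recolour.
apply: (recolour_proper_permuted (L := [:: v; x; y])); rewrite ?new //; last exact/allP.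
- by unchanged_tac.
- by move=> c uc; rewrite ?inE; intro_neq; distinctness; solve_adj'.
- by distinctness; solve_adj'.
Qed.

Lemma recolour_proper_w :
  (forall b c, adj w b -> adj w c -> b != c -> recolour w b != recolour w c) /\
  (forall b, adj w b -> f w != recolour w b).
Proof.
have new : map (recolour w) [:: v; z; t] = [:: cvw; cwz; cwt] by distinctness; eval_recolour.
apply: (recolour_proper_permuted (L := [:: v; z; t])); rewrite ?new //; last exact/allP.
- by unchanged_tac.
- by move=> c wc; rewrite ?inE; intro_neq; distinctness; solve_adj'.
- by distinctness; solve_adj'.
Qed.

Lemma recolour_proper_p :
  (forall b c, adj p b -> adj p c -> b != c -> recolour p b != recolour p c) /\
  (forall b, adj p b -> f p != recolour p b).
Proof.
have new : map (recolour p) [:: y; z] = [:: cpy; cpz] by distinctness; eval_recolour.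
apply: (recolour_proper_permuted (L := [:: y; z])); rewrite ?new //; last exact/allP.
- by unchanged_tac.
- by move=> c pc; rewrite ?inE; intro_neq; distinctness; solve_adj'.
- by distinctness; solve_adj'.
Qed.

Lemma recolour_proper_x :
  forall b c, adj x b -> adj x c -> b != c -> recolour x b != recolour x c.
Proof.
have new : map (recolour x) [:: v; u] = [:: cvx; cux] by distinctness; eval_recolour.
apply: (recolour_proper_one_unchanged (L := [:: v; u])); rewrite ?new.
- by unchanged_tac.
- by move=> b c /Nx + /Nx; rewrite !inE => /or3P[]/eqP-> /or3P[]/eqP->; rewrite ?eqxx ?orbT.
- move=> c /Nx; rewrite !inE => /or3P[]/eqP->; rewrite ?eqxx ?orbT // => _.
  by have D := new_x; neq_of D; simpl_neq.
- by move: new_x; rewrite -[[:: _; _; _]]/([:: cvx; cux] ++ [:: g x x']) cat_uniq => /andP[].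
Qed.

Lemma recolour_proper_t :
  forall b c, adj t b -> adj t c -> b != c -> recolour t b != recolour t c.
Proof.
have new : map (recolour t) [:: v; w] = [:: cvt; cwt] by distinctness; eval_recolour.
apply: (recolour_proper_one_unchanged (L := [:: v; w])); rewrite ?new.
- by unchanged_tac.
- by move=> b c /Nt + /Nt; rewrite !inE => /or3P[]/eqP-> /or3P[]/eqP->; rewrite ?eqxx ?orbT.
- move=> c /Nt; rewrite !inE => /or3P[]/eqP->; rewrite ?eqxx ?orbT // => _.
  by have D := new_t; neq_of D; simpl_neq.
- by move: new_t; rewrite -[[:: _; _; _]]/([:: cvt; cwt] ++ [:: g t t']) cat_uniq => /andP[].
Qed.

Lemma recolour_proper_y :
  forall b c, adj y b -> adj y c -> b != c -> recolour y b != recolour y c.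
Proof.
have new : map (recolour y) [:: v; u; p] = [:: cvy; cuy; cpy] by distinctness; eval_recolour.
apply: (recolour_proper_one_unchanged (L := [:: v; u; p])); rewrite ?new //.
- by unchanged_tac.
- by move=> b c /Ny ->.
- by move=> c /Ny ->.
Qed.

Lemma recolour_proper_z :
  forall b c, adj z b -> adj z c -> b != c -> recolour z b != recolour z c.
Proof.
have new : map (recolour z) [:: v; w; p] = [:: cvz; cwz; cpz] by distinctness; eval_recolour.
apply: (recolour_proper_one_unchanged (L := [:: v; w; p])); rewrite ?new //.
- by unchanged_tac.
- by move=> b c /Nz ->.
- by move=> c /Nz ->.
- by have D := new_z; neq_of D; simpl_neq.
Qed.

Lemma recolour_unchanged a c : a \notin [:: v; x; u; y; z; w; t; p] -> recolour a c = g a c.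
Proof. by rewrite !inE; intro_neq; rewrite /recolour override_id //= !eq_set2; simpl_neq. Qed.

Lemma recolour_total_coloring_off : total_coloring_off adj [:: x; y; z; t] f recolour.
Proof.
split.
- move=> a b ab; have [vy | not_vy] := boolP ([set a; b] == [set v; y]).
    by move: vy; rewrite eq_set2 => /orP[]/andP[/eqP-> /eqP->]; distinctness; eval_recolour.
  by apply/override_sym/g_sym; rewrite /delete_edge ab.
- by move=> a b ab; rewrite !inE; intro_neq; intro_neq; apply: f_adj; solve_adj'.
- move=> a b ab; rewrite !inE; intro_neq.
  have [av | av] := eqVneq a v; first by subst a; apply: (proj2 recolour_proper_v).
  have [au | au] := eqVneq a u; first by subst a; apply: (proj2 recolour_proper_u).
  have [aw | aw] := eqVneq a w; first by subst a; apply: (proj2 recolour_proper_w).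
  have [ap | ap] := eqVneq a p; first by subst a; apply: (proj2 recolour_proper_p).
  neq_of av; neq_of au; neq_of aw; neq_of ap.
  rewrite recolour_unchanged; last by rewrite !inE; simpl_neq.
  by apply: fg_adj; solve_adj'.
- move=> a b c ab ac.
  have [av | av] := eqVneq a v; first by subst a; apply: (proj1 recolour_proper_v).
  have [au | au] := eqVneq a u; first by subst a; apply: (proj1 recolour_proper_u).
  have [aw | aw] := eqVneq a w; first by subst a; apply: (proj1 recolour_proper_w).
  have [ap | ap] := eqVneq a p; first by subst a; apply: (proj1 recolour_proper_p).
  have [ax | ax] := eqVneq a x; first by subst a; apply: recolour_proper_x.
  have [ay | ay] := eqVneq a y; first by subst a; apply: recolour_proper_y.
  have [az | az] := eqVneq a z; first by subst a; apply: recolour_proper_z.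
  have [a_t | a_t] := eqVneq a t; first by subst a; apply: recolour_proper_t.
  neq_of av; neq_of au; neq_of aw; neq_of ap; neq_of ax; neq_of ay; neq_of az; neq_of a_t.
  have aL : a \notin [:: v; x; u; y; z; w; t; p] by rewrite !inE; simpl_neq.
  by rewrite !recolour_unchanged //; apply: g_adj => //; solve_adj'.
Qed.

End Recolouring.

Lemma configuration_colorable : total_colorable adj 9.
Proof.
have [al al_fv al_free] := free_colour_at_v.
have [x' xx' Ux] : exists2 x', adj x x' & uniq [:: v; u; x'].
  by apply: (deg3_third_neighbour dx) => //; distinctness; simpl_adj; simpl_neq.
have [t' tt' Ut] : exists2 t', adj t t' & uniq [:: v; w; t'].
  by apply: (deg3_third_neighbour dt) => //; distinctness; simpl_adj; simpl_neq.
have Nx : forall d, adj x d -> d \in [:: v; u; x'].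
  by apply: deg3_neighbours => //; distinctness; simpl_adj.
have Nt : forall d, adj t d -> d \in [:: v; w; t'].
  by apply: deg3_neighbours => //; distinctness; simpl_adj.
have Ny : forall d, adj y d -> d \in [:: v; u; p].
  by apply: deg3_neighbours => //; distinctness; simpl_adj; simpl_neq.
have Nz : forall d, adj z d -> d \in [:: v; w; p].
  by apply: deg3_neighbours => //; distinctness; simpl_adj; simpl_neq.
have old_v : uniq (al :: map (g v) [:: x; u; z; w; t]).
  by rewrite cons_uniq colour_notin_map ?uniq_map_colours //; distinctness; solve_adj'.
have old_u : uniq [:: g v u; g u x; g u y].
  rewrite (@g_sym v u); last by distinctness; solve_adj'.
  by apply: (uniq_map_colours (L := [:: v; x; y])); distinctness; solve_adj'.
have old_w : uniq [:: g v w; g w z; g w t].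
  rewrite (@g_sym v w); last by distinctness; solve_adj'.
  by apply: (uniq_map_colours (L := [:: v; z; t])); distinctness; solve_adj'.
have old_p : g p y != g p z by apply: g_adj; distinctness; solve_adj'.
have old_x : uniq [:: g v x; g u x; g x x'].
  rewrite (@g_sym v x) ?(@g_sym u x); try by distinctness; solve_adj'.
  have D := Ux; neq_of D.
  by apply: (uniq_map_colours (L := [:: v; u; x'])); distinctness; solve_adj'.
have old_y : g u y != g p y.
  rewrite (@g_sym u y) ?(@g_sym p y); try by distinctness; solve_adj'.
  by apply: g_adj; distinctness; solve_adj'.
have old_z : uniq [:: g v z; g p z; g w z].
  rewrite (@g_sym v z) ?(@g_sym p z) ?(@g_sym w z); try by distinctness; solve_adj'.
  by apply: (uniq_map_colours (L := [:: v; p; w])); distinctness; solve_adj'.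
have old_t : uniq [:: g v t; g w t; g t t'].
  rewrite (@g_sym v t) ?(@g_sym w t); try by distinctness; solve_adj'.
  have D := Ut; neq_of D.
  by apply: (uniq_map_colours (L := [:: v; w; t'])); distinctness; solve_adj'.
have [cvx [cvu [cvy [cvz [cvw [cvt [cux [cuy [cwz [cwt [cpy [cpz]]]]]]]]]]]] :=
  local_recolouring old_v old_u old_w old_p old_x old_y old_z old_t.
case/and3P=> /and4P[nv nv_old nu nu_old] /and4P[nw nw_old np np_old] /and4P[nx ny nz nt].
rewrite (@g_sym v u) in nu_old; last by distinctness; solve_adj'.
rewrite (@g_sym v w) in nw_old; last by distinctness; solve_adj'.
apply: (total_colorable_off adj_irr adj_sym (S := [:: x; y; z; t])); first by rewrite /= dx dy dz dt.
exact: (recolour_total_coloring_off al_fv al_free Nx Nt Ny Nz nv nv_old nu nu_old nw nw_old np np_old nx ny nz nt).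
Qed.

End Configuration.

Theorem lemma2p12 (T : finType) (adj : rel T) :
  minimal_counterexample adj ->
  ~ (exists v x u y z w t p : T,
       deg adj v = 8 /\
       uniq [:: x; u; y; z; w; t] /\
       adj v x /\ adj v u /\ adj v y /\ adj v z /\ adj v w /\ adj v t /\
       p \notin [:: v; x; u; y; z; w; t] /\
       adj x u /\ adj u y /\ adj z w /\ adj w t /\
       adj p y /\ adj p z /\
       deg adj x = 3 /\ deg adj y = 3 /\ deg adj z = 3 /\ deg adj t = 3).
Proof.
move=> M [v [x [u [y [z [w [t [p [dv [U6 [avx [avu [avy [avz [avw [avt [pn
  [axu [auy [azw [awt [apy [apz [dx [dy [dz dt]]]]]]]]]]]]]]]]]]]]]]]]]].
have [[irr sym] [_ [_ [_ [not_colorable _]]]]] := M.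
have [f [g col]] := delete_edge_colorable M avy.
have distinct : uniq [:: v; x; u; y; z; w; t; p].
  have /norP[pv pN] := pn.
  rewrite -[[:: v; x; u; y; z; w; t; p]]/(v :: rcons [:: x; u; y; z; w; t] p).
  rewrite cons_uniq rcons_uniq U6 mem_rcons in_cons pN negb_or [v == p]eq_sym pv /=.
  by rewrite !inE !negb_or ![v == _]eq_sym !(adj_neq irr).
by apply: not_colorable; apply: (configuration_colorable irr sym distinct) col.
Qed.
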